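(* Fix integers $d\geq 2$ and $n\geq d+2$. For every configuration $X=\{x_i\}_{i\in[n]}$ of $n$ points on the unit sphere $S^{d-1}\subseteq\mathbb{R}^d$, it holds that $\delta(X)\leq 1$. Furthermore, $\delta(X)=1$ if and only if $\alpha(X)=0$. Consequently, when $d+2\leq n\leq 2d$, the $n$-point softmax codes in $S^{d-1}$ are precisely the $n$-point spherical codes in $S^{d-1}$.
   Context: $[n]=\{1,\ldots,n\}$. For a configuration $X=\{x_i\}_{i\in[n]}$ in $S^{d-1}$, define $\delta(X):=\min_{j\in[n]}\operatorname{dist}(x_j,\operatorname{conv}\{x_i\}_{i\in[n]\setminus\{j\}})$ (Euclidean distance to the convex hull of the other points) and $\alpha(X):=\max_{i\neq j}\langle x_i,x_j\rangle$. An $n$-point configuration in $S^{d-1}$ is a softmax code if it maximizes $\delta$ over all $n$-point configurations in $S^{d-1}$, and a spherical code if it minimizes $\alpha$ over all $n$-point configurations in $S^{d-1}$. (It is known that for $n\ge d+2$ one always has $\alpha(X)\ge 0$, with equality achievable iff $n\le 2d$.) *)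

From HB Require Import structures.
From mathcomp Require Import all_boot all_order all_algebra.
From mathcomp Require Import boolp classical_sets reals.
Set Implicit Arguments. Unset Strict Implicit. Unset Printing Implicit Defensive.
Import Order.TTheory GRing.Theory Num.Theory.
Local Open Scope ring_scope.
Local Open Scope classical_set_scope.

Section Defs.
Variable R : realType.

Definition dotp (d : nat) (u v : 'rV[R]_d) : R := \sum_(k < d) u ord0 k * v ord0 k.
Definition enorm (d : nat) (u : 'rV[R]_d) : R := Num.sqrt (dotp u u).

Definition on_sphere (d n : nat) (X : 'I_n -> 'rV[R]_d) : Prop :=
  forall i, dotp (X i) (X i) = 1.

Definition conv_others (d n : nat) (X : 'I_n -> 'rV[R]_d) (j : 'I_n) : set 'rV[R]_d :=
  [set y | exists w : 'I_n -> R,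
     (forall i, 0 <= w i) /\ \sum_(i < n | i != j) w i = 1 /\
     y = \sum_(i < n | i != j) w i *: X i].

Definition dist_hull (d n : nat) (X : 'I_n -> 'rV[R]_d) (j : 'I_n) : R :=
  inf [set enorm (X j - y) | y in conv_others X j].

(* delta(X) = min_j dist(x_j, conv{x_i}_{i<>j})  (a minimum over a finite set) *)
Definition delta (d n : nat) (X : 'I_n -> 'rV[R]_d) : R :=
  inf [set dist_hull X j | j in [set: 'I_n]].

(* alpha(X) = max_{i<>j} <x_i, x_j>  (a maximum over a finite set) *)
Definition alpha (d n : nat) (X : 'I_n -> 'rV[R]_d) : R :=
  sup [set dotp (X p.1) (X p.2) | p in [set p : 'I_n * 'I_n | p.1 != p.2]].

Definition softmax_code (d n : nat) (X : 'I_n -> 'rV[R]_d) : Prop :=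
  on_sphere X /\ forall Y : 'I_n -> 'rV[R]_d, on_sphere Y -> delta Y <= delta X.

Definition spherical_code (d n : nat) (X : 'I_n -> 'rV[R]_d) : Prop :=
  on_sphere X /\ forall Y : 'I_n -> 'rV[R]_d, on_sphere Y -> alpha X <= alpha Y.

End Defs.

From HB Require Import structures.
From mathcomp Require Import all_boot all_order all_algebra.
From mathcomp Require Import boolp classical_sets reals numfun.
From mathcomp Require Import ring lra zify.
Set Implicit Arguments. Unset Strict Implicit. Unset Printing Implicit Defensive.
Import Order.TTheory GRing.Theory Num.Theory.
Local Open Scope ring_scope.

(* Since n - 1 > d, the points other than x_m admit a linear dependence. Split
   it into its positive and negative parts, of masses s >= t (up to a sign):
   both parts represent the same vector p, and y = p / s lies in the hull of
   the points carrying positive weight. If p = 0, then 0 lies in the hull of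
   the points other than x_m. Otherwise, averaging |x_i - y|^2 - 1 against the
   negative weights gives (t - 2 s) |y|^2 < 0, so some x_k is at distance < 1
   from the hull of the others. Either way delta(X) <= 1.
   For y in the hull of the others, |x_j - y|^2 >= 1 - 2 alpha(X), and
   <x_j, 0> <= alpha(X) when 0 is in that hull; so either case of the
   dichotomy gives alpha(X) >= 0, and alpha(X) <= 0 forces delta(X) = 1. Conversely, if delta(X) = 1 then 0 lies
   in every hull conv{x_i}_{i <> j}, which therefore contains the segments
   [0, x_i]; |x_j - t x_i| >= 1 for small t > 0 forces <x_j, x_i> <= 0.
   For n <= 2d the cross-polytope attains alpha = 0, so both kinds of codes
   are exactly the configurations with alpha(X) = 0. *)

Section Dotp.
Variables (R : realType) (d : nat).
Implicit Types u v w : 'rV[R]_d.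

Lemma dotpC u v : dotp u v = dotp v u.
Proof. by apply: eq_bigr => k _; rewrite mulrC. Qed.

Lemma dotpDl u v w : dotp (u + v) w = dotp u w + dotp v w.
Proof. by rewrite /dotp -big_split; apply: eq_bigr => k _; rewrite mxE mulrDl. Qed.

Lemma dotpZl (a : R) u w : dotp (a *: u) w = a * dotp u w.
Proof. by rewrite /dotp mulr_sumr; apply: eq_bigr => k _; rewrite mxE mulrA. Qed.

Lemma dotpZr (a : R) u w : dotp w (a *: u) = a * dotp w u.
Proof. by rewrite dotpC dotpZl dotpC. Qed.

Lemma dotpNl u w : dotp (- u) w = - dotp u w.
Proof. by rewrite -scaleN1r dotpZl mulN1r. Qed.

Lemma dotpNr u w : dotp w (- u) = - dotp w u.
Proof. by rewrite dotpC dotpNl dotpC. Qed.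

Lemma dotp0r w : dotp w 0 = 0.
Proof. by rewrite -(scale0r 0) dotpZr mul0r. Qed.

Lemma dotpBB u v : dotp (u - v) (u - v) = dotp u u - 2 * dotp u v + dotp v v.
Proof. by rewrite dotpDl dotpNl !(dotpC _ (u - v)) !dotpDl !dotpNl (dotpC v u) ; ring. Qed.

Lemma dotp_suml (I : finType) (P : pred I) (F : I -> 'rV[R]_d) w :
  dotp (\sum_(i | P i) F i) w = \sum_(i | P i) dotp (F i) w.
Proof.
rewrite /dotp exchange_big /=; apply: eq_bigr => k _.
by rewrite summxE mulr_suml.
Qed.

Lemma dotp_sumr (I : finType) (P : pred I) (F : I -> 'rV[R]_d) w :
  dotp w (\sum_(i | P i) F i) = \sum_(i | P i) dotp w (F i).
Proof. by rewrite dotpC dotp_suml; apply: eq_bigr => i _; rewrite dotpC. Qed.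

Lemma dotp_ge0 u : 0 <= dotp u u.
Proof. by apply: sumr_ge0 => k _; rewrite -expr2 sqr_ge0. Qed.

Lemma dotp_gt0 u : u != 0 -> 0 < dotp u u.
Proof.
move=> u0; rewrite lt_def dotp_ge0 andbT; apply: contraNneq u0 => /eqP.
rewrite psumr_eq0 => [/allP u0|k _]; last by rewrite -expr2 sqr_ge0.
apply/eqP/rowP => k; rewrite mxE.
by have := u0 k (mem_index_enum k); rewrite mulf_eq0 orbb => /eqP.
Qed.

Lemma enorm_ge1 u : (1 <= enorm u) = (1 <= dotp u u).
Proof. by rewrite /enorm -sqrtr1 ler_sqrt ?sqrtr1 // dotp_ge0. Qed.

Lemma enorm_le1 u : (enorm u <= 1) = (dotp u u <= 1).
Proof. by rewrite /enorm -{1}sqrtr1 ler_sqrt. Qed.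

End Dotp.

Lemma exists_neq n (j : 'I_n) : (1 < n)%N -> exists i, i != j.
Proof.
move=> n1; have /card_gt0P[i ij] : (0 < #|predC1 j|)%N by rewrite cardC1 card_ord; lia.
by exists i.
Qed.

Section Hull.
Variables (R : realType) (d n : nat) (X : 'I_n -> 'rV[R]_d).

Lemma conv_others_point i j : i != j -> conv_others X j (X i).
Proof.
move=> ij; exists (fun k => (k == i)%:R); split; first by move=> k; rewrite ler0n.
split; rewrite (bigD1 i) //= eqxx ?scale1r big1 ?addr0 // => k /andP[_ /negbTE ->].
  by [].
by rewrite scale0r.
Qed.

Lemma conv_others_convex j y z t : conv_others X j y -> conv_others X j z ->
  0 <= t <= 1 -> conv_others X j ((1 - t) *: y + t *: z).
Proof.
move=> [v [v0 [v1 ->]]] [w [w0 [w1 ->]]] /andP[t0 t1].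
exists (fun i => (1 - t) * v i + t * w i); split; [|split].
- by move=> i; rewrite addr_ge0 // mulr_ge0 // subr_ge0.
- by rewrite big_split /= -!mulr_sumr v1 w1; ring.
- rewrite !scaler_sumr -big_split /=; apply: eq_bigr => i _.
  by rewrite !scalerA scalerDl.
Qed.

Lemma conv_others_normalized j (a : 'I_n -> R) : (forall i, 0 <= a i) ->
  a j = 0 -> 0 < \sum_i a i ->
  conv_others X j ((\sum_i a i)^-1 *: \sum_i a i *: X i).
Proof.
move=> a0 aj s0; exists (fun i => (\sum_i a i)^-1 * a i); split; [|split].
- by move=> i; rewrite mulr_ge0 ?invr_ge0 ?a0 ?ltW.
- rewrite -mulr_sumr [X in _ * X]big_rmcond => [|i /negPn/eqP -> //].
  by rewrite mulVf ?gt_eqF.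
- rewrite scaler_sumr [RHS]big_rmcond => [|i /negPn/eqP ->]; last by rewrite aj mulr0 scale0r.
  by apply: eq_bigr => i _; rewrite scalerA.
Qed.

Lemma dist_hull_le j y : conv_others X j y -> dist_hull X j <= enorm (X j - y).
Proof.
move=> hy; apply: ge_inf; last by exists y.
by exists 0 => _ [z _ <-]; apply: sqrtr_ge0.
Qed.

Lemma le_dist_hull j r : (1 < n)%N ->
  (forall y, conv_others X j y -> r <= enorm (X j - y)) -> r <= dist_hull X j.
Proof.
move=> n1 hr; apply: lb_le_inf => [|_ [y hy <-]]; last exact: hr.
have [i ij] := exists_neq j n1.
by exists (enorm (X j - X i)), (X i); last by []; apply: conv_others_point.
Qed.

Lemma delta_le j : (1 < n)%N -> delta X <= dist_hull X j.
Proof.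
move=> n1; apply: ge_inf; last by exists j.
exists 0 => _ [k _ <-]; apply: le_dist_hull => // y _; exact: sqrtr_ge0.
Qed.

Lemma le_delta r : (0 < n)%N -> (forall j, r <= dist_hull X j) -> r <= delta X.
Proof.
move=> n0 hr; apply: lb_le_inf => [|_ [j _ <-] //].
by exists (dist_hull X (Ordinal n0)), (Ordinal n0).
Qed.

Lemma dotp_le_alpha i j : i != j -> dotp (X i) (X j) <= alpha X.
Proof.
move=> ij; apply: ub_le_sup; last by exists (i, j).
exists (\sum_(p : 'I_n * 'I_n) `|dotp (X p.1) (X p.2)|) => _ [p _ <-].
rewrite (le_trans (ler_norm _)) // (bigD1 p) //= lerDl.
by rewrite sumr_ge0.
Qed.

Lemma alpha_le r : (1 < n)%N ->
  (forall i j, i != j -> dotp (X i) (X j) <= r) -> alpha X <= r.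
Proof.
move=> n1 hr; apply: ge_sup => [|_ [p hp <-]]; last exact: hr.
have n0 : (0 < n)%N by lia.
have [i ij] := exists_neq (Ordinal n0) n1.
by exists (dotp (X i) (X (Ordinal n0))), (i, Ordinal n0).
Qed.

Lemma dotp_conv_others_le_alpha j y : conv_others X j y -> dotp (X j) y <= alpha X.
Proof.
move=> [w [w0 [w1 ->]]]; rewrite dotp_sumr -[alpha X]mul1r -w1 mulr_suml.
by apply: ler_sum => i ij; rewrite dotpZr ler_wpM2l // dotp_le_alpha // eq_sym.
Qed.

End Hull.

Lemma exists_nonzero_left_kernel (F : fieldType) m p (A : 'M[F]_(m, p)) :
  (p < m)%N -> exists2 c : 'rV[F]_m, c != 0 & c *m A = 0.
Proof.
move=> pm; have KA : kermx A != 0.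
  by rewrite kermx_eq0 /row_free ltn_eqF // (leq_ltn_trans (rank_leq_col A)).
have [i Ki] : exists i, row i (kermx A) != 0.
  apply/existsP; apply: contraNT KA => /existsPn K0.
  by apply/eqP/row_matrixP => i; rewrite row0; apply/eqP/negPn/K0.
by exists (row i (kermx A)); rewrite // -row_mul mulmx_ker row0.
Qed.

Lemma exists_dependence_except (F : fieldType) d n (X : 'I_n -> 'rV[F]_d) m :
  (d.+1 < n)%N ->
  exists c : 'I_n -> F, [/\ c m = 0, exists i, c i != 0 & \sum_i c i *: X i = 0].
Proof.
move=> n_gt.
pose A : 'M[F]_(n, d + 1) := row_mx (\matrix_(i < n) X i) (\col_i (i == m)%:R).
have [c c0] := @exists_nonzero_left_kernel _ _ _ A ltac:(by rewrite addn1).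
rewrite mul_mx_row -[0 : 'M_(1, d + 1)]row_mx0 => /eq_row_mx [cX cm].
exists (fun i => c 0 i); split.
- move/matrixP : cm => /(_ 0 0); rewrite !mxE (bigD1 m) //= big1 => [|i /negbTE im].
    by rewrite !mxE eqxx mulr1 addr0.
  by rewrite !mxE im mulr0.
- apply/existsP; apply: contraNT c0 => /existsPn c0.
  by apply/eqP/rowP => i; rewrite mxE; apply/eqP/negPn/c0.
- by rewrite -[RHS]cX mulmx_sum_row; apply: eq_bigr => i _; rewrite rowK.
Qed.

Section Sphere.
Variables (R : realType) (d n : nat) (X : 'I_n -> 'rV[R]_d).
Hypothesis X_sphere : on_sphere X.

Lemma sqdist_conv_others_ge j y : conv_others X j y ->
  1 - 2 * alpha X <= dotp (X j - y) (X j - y).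
Proof.
move=> hy; rewrite dotpBB X_sphere.
have := dotp_conv_others_le_alpha hy; have := dotp_ge0 y; lra.
Qed.

Lemma exists_near_point (b : 'I_n -> R) s y : (forall i, 0 <= b i) -> 0 < s ->
  \sum_i b i <= s -> y != 0 -> \sum_i b i *: X i = s *: y ->
  exists2 k, 0 < b k & dotp (X k - y) (X k - y) < 1.
Proof.
move=> b0 s0 bs y0 bX.
have mean : \sum_i b i * (dotp (X i - y) (X i - y) - 1) = (\sum_i b i - 2 * s) * dotp y y.
  transitivity (\sum_i (b i * dotp y y - 2 * dotp (b i *: X i) y)).
    by apply: eq_bigr => i _; rewrite dotpBB X_sphere dotpZl; ring.
  by rewrite sumrB -mulr_suml -mulr_sumr -dotp_suml bX dotpZl; ring.
have [k /andP[bk hk] | far] := pickP (fun k => (0 < b k) && (dotp (X k - y) (X k - y) < 1)).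
  by exists k.
suff : 0 <= (\sum_i b i - 2 * s) * dotp y y by have := dotp_gt0 y0; nra.
rewrite -mean sumr_ge0 // => k _; have [->|bk] := eqVneq (b k) 0; first by rewrite mul0r.
have bk_gt0 : 0 < b k by rewrite lt_def bk b0.
by move: (far k); rewrite bk_gt0 /= => /negbT; rewrite -leNgt -subr_ge0; apply: mulr_ge0.
Qed.

Lemma conv_others0_or_near m : (d.+1 < n)%N -> conv_others X m 0 \/
  exists k y, conv_others X k y /\ dotp (X k - y) (X k - y) < 1.
Proof.
move=> n_gt; have [c [cm [i ci] cX]] := exists_dependence_except X m n_gt.
wlog neg_le : c cm ci cX / \sum_i c^\- i <= \sum_i c^\+ i.
  move=> wlog; have [|/ltW pos_le] := leP (\sum_i c^\- i) (\sum_i c^\+ i); first exact: wlog.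
  apply: (wlog (\- c)); rewrite ?funrposN ?funrnegN //= ?cm ?oppr0 ?oppr_eq0 //.
  by under eq_bigr do rewrite scaleNr; rewrite sumrN cX oppr0.
have cE k : c k = c^\+ k - c^\- k by rewrite -[in LHS](funrposBneg c).
set s := \sum_i c^\+ i.
have s_gt0 : 0 < s.
  rewrite lt_def sumr_ge0 // andbT; apply: contraNneq ci => s0.
  have neg0 : \sum_i c^\- i = 0 by apply/le_anti; rewrite -{2}s0 neg_le sumr_ge0.
  by rewrite cE (psumr_eq0P _ s0) ?(psumr_eq0P _ neg0) ?subr0.
have pE : \sum_i c^\- i *: X i = \sum_i c^\+ i *: X i.
  apply/eqP; rewrite eq_sym -subr_eq0 -sumrB -[X in _ == X]cX.
  by apply/eqP/eq_bigr => k _; rewrite -scalerBl -cE.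
set y := s^-1 *: \sum_i c^\+ i *: X i.
have y_conv k : c^\+ k = 0 -> conv_others X k y.
  by move=> ck; apply: conv_others_normalized.
have [y0 | y_neq0] := eqVneq y 0.
  by left; rewrite -y0; apply: y_conv; rewrite /funrpos cm maxxx.
have negX : \sum_i c^\- i *: X i = s *: y.
  by rewrite pE /y scalerA divff ?scale1r // gt_eqF.
right; have [k ck hk] := exists_near_point (funrneg_ge0 c) s_gt0 neg_le y_neq0 negX.
exists k, y; split => //; apply: y_conv.
move: ck; rewrite /funrneg /funrpos lt_max ltxx orbF oppr_gt0 => ck.
exact/max_idPr/ltW.
Qed.

Lemma dotp_le0_of_far j i :
  (forall y, conv_others X j y -> 1 <= dotp (X j - y) (X j - y)) ->
  conv_others X j 0 -> i != j -> dotp (X j) (X i) <= 0.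
Proof.
move=> far hull0 ij; rewrite leNgt; apply/negP => a_gt0.
set a := dotp (X j) (X i) in a_gt0.
set t := Num.min a 1.
have t_gt0 : 0 < t by rewrite lt_min a_gt0 ltr01.
have t_le_a : t <= a by rewrite ge_min lexx.
have t_le1 : t <= 1 by rewrite ge_min lexx orbT.
have := conv_others_convex hull0 (conv_others_point X ij) (t:=t).
rewrite scaler0 add0r ltW //= => /(_ t_le1) /far.
rewrite dotpBB X_sphere dotpZr dotpZl dotpZr X_sphere -/a; nra.
Qed.

End Sphere.

Section Extremal.
Variables (R : realType) (d n : nat) (X : 'I_n -> 'rV[R]_d).
Hypotheses (n_gt : (d.+1 < n)%N) (X_sphere : on_sphere X).

Let n_gt0 : (0 < n)%N. Proof. lia. Qed.
Let n_gt1 : (1 < n)%N. Proof. lia. Qed.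

Lemma delta_le1 : delta X <= 1.
Proof.
have [j [y [hy y_near]]] : exists j y, conv_others X j y /\ dotp (X j - y) (X j - y) <= 1.
  case: (conv_others0_or_near X_sphere (Ordinal n_gt0) n_gt) => [hull0 | [k [y [hy /ltW]]]].
    by exists (Ordinal n_gt0), 0; rewrite subr0 X_sphere.
  by exists k, y.
rewrite (le_trans (delta_le X j n_gt1)) // (le_trans (dist_hull_le hy)) //.
by rewrite enorm_le1.
Qed.

Lemma alpha_ge0 : 0 <= alpha X.
Proof.
case: (conv_others0_or_near X_sphere (Ordinal n_gt0) n_gt) => [hull0 | [k [y [hy near]]]].
  by have := dotp_conv_others_le_alpha hull0; rewrite dotp0r.
by have := sqdist_conv_others_ge X_sphere hy; lra.
Qed.

Lemma delta_eq1 : delta X = 1 <-> alpha X <= 0.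
Proof.
split => [delta1 | alpha_le0].
  have far j y : conv_others X j y -> 1 <= dotp (X j - y) (X j - y).
    move=> hy; rewrite -enorm_ge1 -delta1.
    exact: le_trans (delta_le X j n_gt1) (dist_hull_le hy).
  have hull0 j : conv_others X j 0.
    case: (conv_others0_or_near X_sphere j n_gt) => // [[k [y [hy near]]]].
    by have := far k y hy; lra.
  apply: alpha_le n_gt1 _ => i j ij; rewrite dotpC.
  exact: (dotp_le0_of_far X_sphere (far j) (hull0 j) ij).
apply/le_anti; rewrite delta_le1 /=; apply: le_delta n_gt0 _ => j.
apply: le_dist_hull n_gt1 _ => y hy; rewrite enorm_ge1.
by have := sqdist_conv_others_ge X_sphere hy; lra.
Qed.

End Extremal.

Section CrossPolytope.
Variables (R : realType) (d n : nat).

Definition unit_row (a : nat) : 'rV[R]_d := \row_(k < d) (k == a :> nat)%:R.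

Lemma dotp_unit_row a b :
  dotp (unit_row a) (unit_row b) = ((a == b) && (a < d)%N)%:R.
Proof.
rewrite /dotp; under eq_bigr do rewrite !mxE -natrM mulnb.
have [<- {b}|ab] := eqVneq a b; last first.
  by rewrite big1 // => k _; case: eqP => // ->; rewrite (negbTE ab).
under eq_bigr do rewrite andbb.
case: ltnP => [ad | da]; last first.
  by rewrite big1 // => k _; rewrite ltn_eqF // (leq_trans (ltn_ord k)).
rewrite (bigD1 (Ordinal ad)) //= eqxx big1 ?addr0 // => k.
by rewrite -val_eqE => /negbTE ->.
Qed.

Definition cross_polytope (i : 'I_n) : 'rV[R]_d :=
  if (i < d)%N then unit_row i else - unit_row (i - d).

Lemma cross_polytope_sphere : (n <= 2 * d)%N -> on_sphere cross_polytope.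
Proof.
move=> n_le i; rewrite /cross_polytope.
case: ifP => [i_lt | _]; rewrite ?dotpNl ?dotpNr ?opprK dotp_unit_row eqxx /= ?i_lt //.
by have -> : (i - d < d)%N by have := ltn_ord i; lia.
Qed.

Lemma cross_polytope_dotp_le0 i j :
  i != j -> dotp (cross_polytope i) (cross_polytope j) <= 0.
Proof.
rewrite -val_eqE /cross_polytope => ij.
case: ifP => i_lt; case: ifP => j_lt;
  rewrite ?dotpNl ?dotpNr ?opprK dotp_unit_row ?oppr_le0 ?ler0n //.
- by rewrite (negbTE ij).
- by rewrite eqn_sub2rE ?(negbTE ij) // leqNgt ?i_lt ?j_lt.
Qed.

End CrossPolytope.

Theorem theorem2 (R : realType) (d n : nat) (hd : (2 <= d)%N) (hn : (d + 2 <= n)%N) :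
  (forall X : 'I_n -> 'rV[R]_d, on_sphere X ->
     delta X <= 1 /\ (delta X = 1 <-> alpha X = 0)) /\
  ((n <= 2 * d)%N ->
     forall X : 'I_n -> 'rV[R]_d, softmax_code X <-> spherical_code X).
Proof.
rewrite addn2 in hn.
have delta_alpha (X : 'I_n -> 'rV[R]_d) : on_sphere X -> delta X = 1 <-> alpha X = 0.
  move=> X_sphere; rewrite delta_eq1 //; split => [alpha_le0 | -> //].
  by apply/le_anti; rewrite alpha_le0 alpha_ge0.
split=> [X X_sphere | n_le X]; first by split; [exact: delta_le1 | exact: delta_alpha].
pose Y : 'I_n -> 'rV[R]_d := @cross_polytope R d n.
have Y_sphere : on_sphere Y by exact: cross_polytope_sphere.
have alphaY : alpha Y <= 0.
  by apply: alpha_le; [lia | exact: cross_polytope_dotp_le0].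
have deltaY : delta Y = 1 by apply/delta_eq1.
split=> [[X_sphere X_max] | [X_sphere X_min]]; split=> // Z Z_sphere.
  have /(delta_alpha X X_sphere) -> : delta X = 1.
    by apply/le_anti; rewrite delta_le1 //= -{1}deltaY X_max.
  exact: alpha_ge0.
have /delta_eq1 -> // : alpha X <= 0 by exact: le_trans (X_min _ Y_sphere) alphaY.
exact: delta_le1.
Qed.
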